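(* Let $(X,\tau,\mathcal{I})$ be a $T_{\mathcal{I}}$-space and let $A\subseteq X$. Then $(A,\tau|_A,\mathcal{I}_A)$ is a $T_{\mathcal{I}_A}$-space, where $\tau|_A$ is the subspace topology and $\mathcal{I}_A=\{I\in\mathcal{I}: I\subseteq A\}=\{I\cap A: I\in\mathcal{I}\}$.
   Context: An ideal on $X$ is a nonempty collection of subsets closed under subsets and finite unions. $(X,\tau,\mathcal{I})$ is a $T_{\mathcal{I}}$-space if for every $I\in\mathcal{I}$ and every $x\in X\setminus I$ there is a set $A_x$ with $x\in A_x$, $A_x\cap I=\emptyset$, and $A_x$ open or closed. *)

Definition subset {X : Type} (A B : X -> Prop) : Prop := forall x, A x -> B x.

Definition is_topology {X : Type} (tau : (X -> Prop) -> Prop) : Prop :=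
  tau (fun _ => False) /\
  tau (fun _ => True) /\
  (forall F : (X -> Prop) -> Prop, subset F tau ->
     tau (fun x => exists U, F U /\ U x)) /\
  (forall U V, tau U -> tau V -> tau (fun x => U x /\ V x)).

Definition is_ideal {X : Type} (Id : (X -> Prop) -> Prop) : Prop :=
  (exists I, Id I) /\
  (forall I J, Id I -> subset J I -> Id J) /\
  (forall I J, Id I -> Id J -> Id (fun x => I x \/ J x)).

Definition is_closed {X : Type} (tau : (X -> Prop) -> Prop) (C : X -> Prop) : Prop :=
  tau (fun x => ~ C x).

Definition T_ideal_space {X : Type} (tau : (X -> Prop) -> Prop)
    (Id : (X -> Prop) -> Prop) : Prop :=
  is_topology tau /\ is_ideal Id /\
  forall I, Id I -> forall x, ~ I x ->
    exists Ax : X -> Prop, Ax x /\ (forall y, ~ (Ax y /\ I y)) /\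
      (tau Ax \/ is_closed tau Ax).

Definition subspace_top {X : Type} (tau : (X -> Prop) -> Prop) (A : X -> Prop)
  : ({x : X | A x} -> Prop) -> Prop :=
  fun U => exists V, tau V /\ (forall a : {x : X | A x}, U a <-> V (proj1_sig a)).

(* I_A = { I in Id : I ⊆ A }, viewed as subsets of the subtype {x | A x}. *)
Definition restr_ideal {X : Type} (Id : (X -> Prop) -> Prop) (A : X -> Prop)
  : ({x : X | A x} -> Prop) -> Prop :=
  fun J => exists I, Id I /\ subset I A /\
    (forall a : {x : X | A x}, J a <-> I (proj1_sig a)).

(* A point a of A lying outside some I in I_A lies outside I in X, so the
   T_I-axiom of X yields a separating set Ax which is open or closed in X;
   its trace on A is open or closed in the subspace and still misses I.
   That I_A is an ideal rests on every subset of the subtype being the trace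
   of a subset of A, which needs proof irrelevance for the membership proofs. *)

From Stdlib Require Import ProofIrrelevance.

Definition trace {X : Type} (A V : X -> Prop) : {x : X | A x} -> Prop :=
  fun a => V (proj1_sig a).

Lemma subspace_top_trace {X : Type} (tau : (X -> Prop) -> Prop) (A V : X -> Prop) :
  tau V -> subspace_top tau A (trace A V).
Proof. intros HV. exists V. split; [exact HV | intros a; tauto]. Qed.

Lemma subspace_closed_trace {X : Type} (tau : (X -> Prop) -> Prop) (A C : X -> Prop) :
  is_closed tau C -> is_closed (subspace_top tau A) (trace A C).
Proof. intros HC. exists (fun x => ~ C x). split; [exact HC | intros a; tauto]. Qed.

Lemma subspace_top_is_topology {X : Type} (tau : (X -> Prop) -> Prop) (A : X -> Prop) :
  is_topology tau -> is_topology (subspace_top tau A).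
Proof.
  intros [Hempty [Hfull [Hunion Hinter]]]. split; [|split; [|split]].
  - exists (fun _ => False). split; [exact Hempty | intros a; tauto].
  - exists (fun _ => True). split; [exact Hfull | intros a; tauto].
  - intros F HF.
    set (G := fun W => tau W /\ exists U, F U /\ forall a, U a <-> W (proj1_sig a)).
    exists (fun x => exists W, G W /\ W x). split.
    + apply Hunion. intros W [HW _]. exact HW.
    + intros a. split.
      * intros [U [FU Ua]]. destruct (HF U FU) as [W [HW HUW]].
        exists W. split; [split; [exact HW | exists U; auto] | apply HUW; exact Ua].
      * intros [W [[_ [U [FU HUW]]] Wa]]. exists U. split; [exact FU | apply HUW; exact Wa].
  - intros U V [U' [HU' HUU']] [V' [HV' HVV']].
    exists (fun x => U' x /\ V' x). split; [apply Hinter; assumption |].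
    intros a. specialize (HUU' a). specialize (HVV' a). tauto.
Qed.

Lemma subtype_pred_trace {X : Type} (A : X -> Prop) (J : {x : X | A x} -> Prop) :
  exists I, subset I A /\ forall a, J a <-> I (proj1_sig a).
Proof.
  exists (fun x => exists h : A x, J (exist _ x h)). split.
  - intros x [h _]. exact h.
  - intros [x h]. simpl. split.
    + intros Jx. exists h. exact Jx.
    + intros [h' Jx]. rewrite (proof_irrelevance _ h h'). exact Jx.
Qed.

Lemma restr_ideal_is_ideal {X : Type} (Id : (X -> Prop) -> Prop) (A : X -> Prop) :
  is_ideal Id -> is_ideal (restr_ideal Id A).
Proof.
  intros [[I0 HI0] [Hsub Hunion]]. split; [|split].
  - exists (fun _ => False), (fun _ => False).
    split; [apply (Hsub I0); [exact HI0 | intros x []] |].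
    split; [intros x [] | intros a; tauto].
  - intros J J' [I [HI [IA HJI]]] HJ'J.
    destruct (subtype_pred_trace A J') as [I' [I'A HJI']].
    exists I'. split; [| split; [exact I'A | exact HJI']].
    apply (Hsub I); [exact HI |]. intros x I'x.
    apply (HJI (exist _ x (I'A x I'x))), HJ'J, HJI'. exact I'x.
  - intros J J' [I [HI [IA HJI]]] [I' [HI' [I'A HJI']]].
    exists (fun x => I x \/ I' x). split; [apply Hunion; assumption |].
    split; [intros x [Hx | Hx]; auto |].
    intros a. specialize (HJI a). specialize (HJI' a). tauto.
Qed.

Lemma restr_separation {X : Type} (tau : (X -> Prop) -> Prop)
    (Id : (X -> Prop) -> Prop) (A : X -> Prop) :
  (forall I, Id I -> forall x, ~ I x ->
     exists Ax : X -> Prop, Ax x /\ (forall y, ~ (Ax y /\ I y)) /\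
       (tau Ax \/ is_closed tau Ax)) ->
  forall J, restr_ideal Id A J -> forall a, ~ J a ->
    exists Aa, Aa a /\ (forall b, ~ (Aa b /\ J b)) /\
      (subspace_top tau A Aa \/ is_closed (subspace_top tau A) Aa).
Proof.
  intros Hsep J [I [HI [_ HJI]]] a Ja.
  assert (Ia : ~ I (proj1_sig a)) by (intros Ia; apply Ja, HJI; exact Ia).
  destruct (Hsep I HI (proj1_sig a) Ia) as [Ax [Axa [Hdisj Hoc]]].
  exists (trace A Ax). split; [exact Axa | split].
  - intros b [Axb Jb]. apply (Hdisj (proj1_sig b)). split; [exact Axb | apply HJI; exact Jb].
  - destruct Hoc as [Ho | Hc].
    + left. apply subspace_top_trace. exact Ho.
    + right. apply subspace_closed_trace. exact Hc.
Qed.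

Theorem mainTheorem4 (X : Type) (tau : (X -> Prop) -> Prop)
    (Id : (X -> Prop) -> Prop) (A : X -> Prop) :
  T_ideal_space tau Id ->
  T_ideal_space (subspace_top tau A) (restr_ideal Id A).
Proof.
  intros [Htop [Hideal Hsep]]. split; [|split].
  - apply subspace_top_is_topology. exact Htop.
  - apply restr_ideal_is_ideal. exact Hideal.
  - apply restr_separation. exact Hsep.
Qed.
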